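(* There exists a family of smooth functions $\{\chi_\delta:\mathbb{R}\to[0,1]\}_{\delta\in(0,1]}$, depending continuously on $\delta$, such that: (i) for each $\delta\in(0,1]$, $\chi_\delta$ is decreasing; (ii) for each $\delta\in(0,1]$ there exists $\eta_\delta>0$ with $\chi_\delta(x)=1$ for $x<\eta_\delta$ and $\chi_\delta(x)=0$ for $x>\frac{\pi}{2}-\eta_\delta$; (iii) $\chi_\delta\to\mathbb{1}_{\{x\le0\}}$ pointwise as $\delta\downarrow0$; (iv) $$\lim_{\delta\downarrow0}\ \sup_{r\in(0,\pi/2)}\frac{\int_0^r-\chi_\delta'(x)\sin(x)\,dx}{\sin(r)}=0.$$ *)

From Stdlib Require Import Reals Lra.
From Coquelicot Require Import Coquelicot.
Open Scope R_scope.

Definition ind_nonpos (x : R) : R := if Rle_dec x 0 then 1 else 0.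

Definition sup_ratio (chi : R -> R) : Rbar :=
  Lub_Rbar (fun y => exists r, 0 < r < PI / 2 /\
    y = RInt (fun x => - Derive chi x * sin x) 0 r / sin r).

From Stdlib Require Import Reals Lra Lia.
From Coquelicot Require Import Coquelicot.
Open Scope R_scope.

(* Take chi_d(x) = 1 - p_d(x e^{1/d}), where p_d(s) = step(s) step(d ln((1 + s^2)/2))
   and step is the usual smooth 0-1 step built from exp(-1/t).  The weight x |chi_d'(x)|
   is invariant under the rescaling s = x e^{1/d}, and s |p_d'(s)| <= 2 d sup|step'|:
   the first factor of p_d is constant where the second one is nonzero, and the logarithm
   has derivative 2ds/(1+s^2).  Hence |int_0^r chi_d' sin| <= 2 d r sup|step'|, while
   sin r >= r/3 on (0, pi/2), so the supremum in (iv) is O(d).  Moreover chi_d = 1 for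
   x e^{1/d} <= 1, and chi_d = 0 as soon as x e^{1/d} >= 1 and x^2 e^{1/d} >= 2, which
   gives the plateaus and, since e^{1/d} > 1/d, the pointwise limit. *)

Fixpoint Cn (n : nat) (f : R -> R) : Prop :=
  match n with
  | O => True
  | S n => (forall x, ex_derive f x) /\ Cn n (Derive f)
  end.

Lemma Cn_ext n : forall f g, (forall x, f x = g x) -> Cn n f -> Cn n g.
Proof.
induction n as [|n IH]; simpl; auto.
intros f g Efg [Df CDf]; split.
- intros x; apply ex_derive_ext with f; auto.
- apply IH with (Derive f); auto.
  intros x; apply Derive_ext; auto.
Qed.

Lemma Cn_pred n f : Cn (S n) f -> Cn n f.
Proof.
revert f; induction n as [|n IH]; simpl; auto.
intros f [Df CDf]; split; auto.
Qed.

Lemma Cn_const n c : Cn n (fun _ => c).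
Proof.
revert c; induction n as [|n IH]; simpl; auto.
intros c; split.
- intros; apply ex_derive_const.
- apply Cn_ext with (fun _ => 0); auto.
  intros; rewrite Derive_const; auto.
Qed.

Lemma Cn_id n : Cn n (fun x => x).
Proof.
destruct n; simpl; auto. split.
- intros; apply ex_derive_id.
- apply Cn_ext with (fun _ => 1); [|apply Cn_const].
  intros x; rewrite <- (Derive_id x); reflexivity.
Qed.

Lemma Cn_plus n : forall f g, Cn n f -> Cn n g -> Cn n (fun x => f x + g x).
Proof.
induction n as [|n IH]; simpl; auto.
intros f g [Df CDf] [Dg CDg]; split.
- intros; apply (ex_derive_plus f g); auto.
- apply Cn_ext with (fun x => Derive f x + Derive g x); auto.
  intros; rewrite Derive_plus; auto.
Qed.

Lemma Cn_mult n : forall f g, Cn n f -> Cn n g -> Cn n (fun x => f x * g x).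
Proof.
induction n as [|n IH]; simpl; auto.
intros f g Cf Cg.
pose proof (Cn_pred _ _ Cf) as Cf'; pose proof (Cn_pred _ _ Cg) as Cg'.
destruct Cf as [Df CDf]; destruct Cg as [Dg CDg]; split.
- intros; apply ex_derive_mult; auto.
- apply Cn_ext with (fun x => Derive f x * g x + f x * Derive g x).
  + intros; rewrite Derive_mult; auto.
  + apply Cn_plus; apply IH; auto.
Qed.

Lemma Cn_scal n c f : Cn n f -> Cn n (fun x => c * f x).
Proof. intros Cf; apply Cn_mult with (f := fun _ => c); auto; apply Cn_const. Qed.

Lemma Cn_opp n f : Cn n f -> Cn n (fun x => - f x).
Proof.
intros Cf; apply Cn_ext with (fun x => -1 * f x); [intros; ring|].
apply Cn_scal; auto.
Qed.

Lemma Cn_minus n f g : Cn n f -> Cn n g -> Cn n (fun x => f x - g x).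
Proof. intros; apply Cn_plus; auto; apply Cn_opp; auto. Qed.

Lemma Cn_comp n : forall f g, Cn n f -> Cn n g -> Cn n (fun x => g (f x)).
Proof.
induction n as [|n IH]; simpl; auto.
intros f g Cf [Dg CDg].
pose proof (Cn_pred _ _ Cf) as Cf'; destruct Cf as [Df CDf]; split.
- intros; apply ex_derive_comp; auto.
- apply Cn_ext with (fun x => Derive f x * Derive g (f x)).
  + intros; rewrite (Derive_comp g f); auto.
  + apply Cn_mult; auto.
Qed.

Lemma Cn_inv n : forall f, (forall x, f x <> 0) -> Cn n f -> Cn n (fun x => / f x).
Proof.
induction n as [|n IH]; simpl; auto.
intros f f_neq0 Cf.
pose proof (Cn_pred _ _ Cf) as Cf'; destruct Cf as [Df CDf]; split.
- intros; apply ex_derive_inv; auto.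
- apply Cn_ext with (fun x => - Derive f x * (/ f x * / f x)).
  + intros; rewrite Derive_inv; auto; field; auto.
  + apply Cn_mult; [apply Cn_opp; auto|].
    apply Cn_mult; apply IH; auto.
Qed.

Lemma Cn_ln n f : (forall x, 0 < f x) -> Cn n f -> Cn n (fun x => ln (f x)).
Proof.
destruct n as [|n]; simpl; auto.
intros f_gt0 Cf.
pose proof (Cn_pred _ _ Cf) as Cf'; destruct Cf as [Df CDf].
assert (Dln : forall x, is_derive ln (f x) (/ f x)).
{ intros x; specialize (f_gt0 x); auto_derive; [lra | field; lra]. }
split.
- intros x; apply ex_derive_comp; auto.
  eexists; apply Dln.
- apply Cn_ext with (fun x => Derive f x * / f x).
  + intros x; rewrite (Derive_comp ln f); [|eexists; apply Dln|auto].
    rewrite (is_derive_unique _ _ _ (Dln x)); reflexivity.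
  + apply Cn_mult; auto.
    apply Cn_inv; auto; intros x; specialize (f_gt0 x); lra.
Qed.

Lemma Cn_ex_derive_n n f : Cn n f -> forall x, ex_derive_n f n x.
Proof.
revert f; induction n as [|n IH]; intros f Cf x; [exact I|].
destruct n as [|n]; [apply Cf|].
destruct Cf as [_ CDf].
apply ex_derive_ext with (Derive_n (Derive f) n).
- intros t; rewrite (Derive_n_comp f n 1), Nat.add_1_r; reflexivity.
- apply (IH _ CDf x).
Qed.

Lemma Cn_continuous_Derive f : Cn 2 f -> forall x, continuous (Derive f) x.
Proof.
intros [_ [DDf _]] x.
apply (ex_derive_continuous (K := R_AbsRing) (V := R_NormedModule)), DDf.
Qed.

Definition flat (k : nat) (t : R) : R :=
  if Rle_dec t 0 then 0 else exp (- / t) * (/ t) ^ k.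

Lemma flat_le0 k t : t <= 0 -> flat k t = 0.
Proof. intros; unfold flat; destruct (Rle_dec t 0); lra. Qed.

Lemma flat_gt0 k t : 0 < t -> flat k t = exp (- / t) * (/ t) ^ k.
Proof. intros; unfold flat; destruct (Rle_dec t 0); lra. Qed.

Lemma pow_le_exp n y : 0 < y -> y ^ n <= INR n ^ n * exp y.
Proof.
intros y_gt0; destruct n as [|n].
{ simpl; pose proof (exp_ineq1_le y); lra. }
set (m := INR (S n)).
assert (m_gt0 : 0 < m) by (apply lt_0_INR; lia).
assert (y_m : 0 < y / m) by (apply Rdiv_lt_0_compat; lra).
assert (exp_y : exp y = exp (y / m) ^ S n).
{ rewrite <- Rpower_pow by apply exp_pos; unfold Rpower; rewrite ln_exp.
  f_equal; fold m; field; lra. }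
assert (pow_y_m : (y / m) ^ S n <= exp (y / m) ^ S n).
{ apply pow_incr; pose proof (exp_ineq1_le (y / m)); lra. }
replace (y ^ S n) with (m ^ S n * (y / m) ^ S n).
- rewrite exp_y; apply Rmult_le_compat_l; auto; apply pow_le; lra.
- unfold Rdiv; rewrite Rpow_mult_distr, pow_inv; field; apply pow_nonzero; lra.
Qed.

(* With [y = 1/h], [flat k h / h = exp (-y) y^(k+2) h <= (k+2)^(k+2) h] by [pow_le_exp]. *)
Lemma is_derive_flat_0 k : is_derive (flat k) 0 0.
Proof.
apply is_derive_Reals; intros eps eps_gt0.
set (m := INR (S (S k)) ^ S (S k)).
assert (m_gt0 : 0 < m) by (apply pow_lt, lt_0_INR; lia).
exists (mkposreal (eps / m) (Rdiv_lt_0_compat _ _ eps_gt0 m_gt0)).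
intros h h_neq0 h_small; simpl in h_small.
rewrite Rplus_0_l, (flat_le0 k 0) by lra.
destruct (Rle_dec h 0) as [h_le0 | h_gt0].
{ rewrite flat_le0 by lra.
  replace ((0 - 0) / h - 0) with 0 by (field; auto).
  rewrite Rabs_R0; auto. }
rewrite Rabs_pos_eq in h_small by lra.
rewrite flat_gt0 by lra.
set (y := / h).
assert (y_gt0 : 0 < y) by (apply Rinv_0_lt_compat; lra).
assert (Hm : exp (- y) * y ^ S (S k) <= m).
{ pose proof (pow_le_exp (S (S k)) y y_gt0) as Hle; pose proof (exp_pos y).
  rewrite exp_Ropp; apply Rmult_le_reg_l with (exp y); auto.
  rewrite <- Rmult_assoc, Rinv_r by lra; fold m in Hle; lra. }
replace ((exp (- y) * y ^ k - 0) / h - 0) with (exp (- y) * y ^ S (S k) * h)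
  by (unfold y; simpl; field; lra).
rewrite Rabs_pos_eq.
- apply Rle_lt_trans with (m * h); [apply Rmult_le_compat_r; lra|].
  apply Rmult_lt_reg_r with (/ m); [apply Rinv_0_lt_compat; auto|].
  replace (m * h * / m) with h by (field; lra); apply h_small.
- apply Rmult_le_pos; [apply Rmult_le_pos; [left; apply exp_pos | apply pow_le] | ]; lra.
Qed.

Lemma is_derive_flat k t :
  is_derive (flat k) t (flat (S (S k)) t - INR k * flat (S k) t).
Proof.
destruct (Rtotal_order t 0) as [t_lt0 | [-> | t_gt0]].
- rewrite !flat_le0 by lra; replace (0 - INR k * 0) with 0 by ring.
  apply is_derive_ext_loc with (fun _ => 0); [|auto_derive; auto].
  apply (filter_imp (fun u => u < 0)); [intros; rewrite flat_le0; lra|].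
  apply open_lt; auto.
- rewrite !flat_le0 by lra; replace (0 - INR k * 0) with 0 by ring.
  apply is_derive_flat_0.
- rewrite !flat_gt0 by lra.
  apply is_derive_ext_loc with (fun u => exp (- / u) * (/ u) ^ k).
  + apply (filter_imp (fun u => 0 < u)); [intros; rewrite flat_gt0; lra|].
    apply open_gt; auto.
  + destruct k as [|k]; auto_derive; try lra; simpl; [field; lra|].
    change (match k with 0%nat => 1 | S _ => INR k + 1 end) with (INR (S k)).
    rewrite S_INR; field; lra.
Qed.

Lemma Cn_flat n : forall k, Cn n (flat k).
Proof.
induction n as [|n IH]; simpl; auto.
intros k; split.
- intros x; eexists; apply is_derive_flat.
- apply Cn_ext with (fun t => flat (S (S k)) t - INR k * flat (S k) t).
  + intros; symmetry; apply is_derive_unique, is_derive_flat.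
  + apply Cn_minus; auto; apply Cn_scal; auto.
Qed.

Lemma flat0_gt0 t : 0 < t -> 0 < flat 0 t.
Proof. intros; rewrite flat_gt0, Rmult_1_r by auto; apply exp_pos. Qed.

Lemma flat0_ge0 t : 0 <= flat 0 t.
Proof.
destruct (Rle_dec t 0); [rewrite flat_le0; lra|].
left; apply flat0_gt0; lra.
Qed.

Lemma flat0_le t s : t <= s -> flat 0 t <= flat 0 s.
Proof.
intros t_le_s; destruct (Rle_dec t 0); [rewrite flat_le0; auto; apply flat0_ge0|].
rewrite !flat_gt0, !Rmult_1_r by lra.
destruct (Req_dec t s) as [<- | t_neq_s]; [lra|].
left; apply exp_increasing, Ropp_lt_contravar, Rinv_lt_contravar; nra.
Qed.

Definition step (t : R) : R := flat 0 t / (flat 0 t + flat 0 (1 - t)).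

Lemma step_denom_gt0 t : 0 < flat 0 t + flat 0 (1 - t).
Proof.
pose proof (flat0_ge0 t); pose proof (flat0_ge0 (1 - t)).
destruct (Rle_dec t 0).
- pose proof (flat0_gt0 (1 - t)); lra.
- pose proof (flat0_gt0 t); lra.
Qed.

Lemma step_le0 t : t <= 0 -> step t = 0.
Proof. intros; unfold step; rewrite flat_le0; auto; unfold Rdiv; ring. Qed.

Lemma step_ge1 t : 1 <= t -> step t = 1.
Proof.
intros; unfold step; rewrite (flat_le0 0 (1 - t)) by lra.
pose proof (flat0_gt0 t); field; lra.
Qed.

Lemma step_range t : 0 <= step t <= 1.
Proof.
unfold step; pose proof (step_denom_gt0 t).
pose proof (flat0_ge0 t); pose proof (flat0_ge0 (1 - t)).
split; [apply Rdiv_le_0_compat; lra|].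
apply Rmult_le_reg_r with (flat 0 t + flat 0 (1 - t)); auto.
unfold Rdiv; rewrite Rmult_assoc, Rinv_l; lra.
Qed.

Lemma step_le t s : t <= s -> step t <= step s.
Proof.
intros t_le_s; unfold step.
pose proof (step_denom_gt0 t); pose proof (step_denom_gt0 s).
pose proof (flat0_le _ _ t_le_s); pose proof (flat0_le (1 - s) (1 - t) ltac:(lra)).
pose proof (flat0_ge0 t); pose proof (flat0_ge0 (1 - s)).
apply Rmult_le_reg_r with ((flat 0 t + flat 0 (1 - t)) * (flat 0 s + flat 0 (1 - s))); [nra|].
unfold Rdiv; field_simplify; nra.
Qed.

Lemma Cn_step n : Cn n step.
Proof.
unfold step; apply Cn_mult; [apply Cn_flat|].
apply Cn_inv; [intros x; pose proof (step_denom_gt0 x); lra|].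
apply Cn_plus; [apply Cn_flat|].
apply Cn_comp with (f := fun x => 1 - x); [|apply Cn_flat].
apply Cn_minus; [apply Cn_const | apply Cn_id].
Qed.

Lemma ex_derive_step t : ex_derive step t.
Proof. apply (Cn_step 1). Qed.

Lemma Derive_step_out t : t < 0 \/ 1 < t -> Derive step t = 0.
Proof.
intros [t_lt0 | t_gt1].
- rewrite Derive_ext_loc with (g := fun _ => 0); [apply Derive_const|].
  apply (filter_imp (fun u => u < 0)); [intros; apply step_le0; lra|].
  apply open_lt; auto.
- rewrite Derive_ext_loc with (g := fun _ => 1); [apply Derive_const|].
  apply (filter_imp (fun u => 1 < u)); [intros; apply step_ge1; lra|].
  apply open_gt; auto.
Qed.

Lemma Derive_step_bounded : exists M, forall t, Rabs (Derive step t) <= M.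
Proof.
destruct (continuity_ab_maj (fun t => Rabs (Derive step t)) 0 1) as [tM [HtM _]]; [lra| |].
{ intros c _; change (continuity_pt (comp Rabs (Derive step)) c).
  apply continuity_pt_comp; [|apply Rcontinuity_abs].
  apply continuity_pt_filterlim, Cn_continuous_Derive, Cn_step. }
exists (Rabs (Derive step tM)); intros t.
destruct (Rle_dec 0 t); [destruct (Rle_dec t 1)|].
- apply HtM; lra.
- rewrite Derive_step_out, Rabs_R0 by lra; apply Rabs_pos.
- rewrite Derive_step_out, Rabs_R0 by lra; apply Rabs_pos.
Qed.

Definition profile (d s : R) : R := step s * step (d * ln ((1 + s ^ 2) / 2)).

Definition chi (d x : R) : R := 1 - profile d (x * exp (/ d)).

Lemma profile_range d s : 0 <= profile d s <= 1.
Proof.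
unfold profile; pose proof (step_range s); pose proof (step_range (d * ln ((1 + s ^ 2) / 2))).
nra.
Qed.

Lemma ln_half_1_plus_sqr_le0 s : -1 <= s <= 1 -> ln ((1 + s ^ 2) / 2) <= 0.
Proof. intros; rewrite <- ln_1; apply ln_le; simpl; nra. Qed.

Lemma profile_le1 d s : 0 <= d -> s <= 1 -> profile d s = 0.
Proof.
intros d_ge0 s_le1; unfold profile.
destruct (Rle_dec s 0); [rewrite step_le0; auto; ring|].
rewrite (step_le0 (d * _)); [ring|].
pose proof (ln_half_1_plus_sqr_le0 s ltac:(lra)); nra.
Qed.

Lemma profile_eq1 d s : 0 < d -> 1 <= s -> exp (/ d) <= (1 + s ^ 2) / 2 -> profile d s = 1.
Proof.
intros d_gt0 s_ge1 E_le; unfold profile.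
rewrite !step_ge1; [ring | |auto].
apply ln_le in E_le; [|apply exp_pos]; rewrite ln_exp in E_le.
apply Rmult_le_compat_l with (r := d) in E_le; [|lra].
rewrite Rinv_r in E_le; lra.
Qed.

Lemma profile_le d s t : 0 <= d -> s <= t -> profile d s <= profile d t.
Proof.
intros d_ge0 s_le_t; destruct (Rle_dec s 1).
{ rewrite profile_le1 by auto; apply profile_range. }
unfold profile; apply Rmult_le_compat; try apply step_range.
- apply step_le; auto.
- apply step_le, Rmult_le_compat_l; auto.
  apply ln_le; simpl; nra.
Qed.

Lemma is_derive_profile d s : is_derive (profile d) s
  (Derive step s * step (d * ln ((1 + s ^ 2) / 2))
   + step s * Derive step (d * ln ((1 + s ^ 2) / 2)) * (2 * d * s / (1 + s ^ 2))).
Proof.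
unfold profile.
pose proof (ex_derive_step s); pose proof (ex_derive_step (d * ln ((1 + s ^ 2) / 2))).
auto_derive; [repeat split; auto; simpl; nra|].
change (fun t => step t) with step; unfold Rdiv; simpl; field; nra.
Qed.

Lemma Derive_step_mul_step_log d s : 0 <= d -> 0 <= s ->
  Derive step s * step (d * ln ((1 + s ^ 2) / 2)) = 0.
Proof.
intros d_ge0 s_ge0; destruct (Rle_dec s 1).
- rewrite step_le0; [ring|].
  pose proof (ln_half_1_plus_sqr_le0 s ltac:(lra)); nra.
- rewrite Derive_step_out by lra; ring.
Qed.

Lemma Derive_profile_bound :
  exists M, forall d s, 0 <= d -> 0 <= s -> Rabs (Derive (profile d) s) * s <= 2 * d * M.
Proof.
destruct Derive_step_bounded as [M HM]; exists M; intros d s d_ge0 s_ge0.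
rewrite (is_derive_unique _ _ _ (is_derive_profile d s)), Derive_step_mul_step_log by auto.
rewrite Rplus_0_l.
set (w := Derive step _); specialize (HM (d * ln ((1 + s ^ 2) / 2))); fold w in HM.
set (c := 2 * d * s / (1 + s ^ 2)).
assert (c_ge0 : 0 <= c) by (apply Rdiv_le_0_compat; simpl; nra).
assert (cs_le : c * s <= 2 * d).
{ replace (c * s) with (2 * d * (s * s / (1 + s ^ 2))) by (unfold c; field; simpl; nra).
  rewrite <- (Rmult_1_r (2 * d)) at 2; apply Rmult_le_compat_l; [lra|].
  apply Rmult_le_reg_r with (1 + s ^ 2); [simpl; nra|].
  unfold Rdiv; rewrite Rmult_assoc, Rinv_l; simpl; nra. }
pose proof (step_range s); pose proof (Rabs_pos w).
rewrite !Rabs_mult, (Rabs_pos_eq (step s)), (Rabs_pos_eq c) by lra.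
assert (0 <= step s * Rabs w <= M) by nra.
replace (step s * Rabs w * c * s) with (step s * Rabs w * (c * s)) by ring.
nra.
Qed.

Lemma chi_range d x : 0 <= chi d x <= 1.
Proof. unfold chi; pose proof (profile_range d (x * exp (/ d))); lra. Qed.

Lemma chi_eq1 d x : 0 <= d -> x * exp (/ d) <= 1 -> chi d x = 1.
Proof. intros; unfold chi; rewrite profile_le1; auto; ring. Qed.

Lemma chi_eq0 d x : 0 < d -> 1 <= x * exp (/ d) -> 2 <= x ^ 2 * exp (/ d) -> chi d x = 0.
Proof.
intros d_gt0 H1 H2; unfold chi; rewrite profile_eq1; auto; [ring|].
pose proof (exp_pos (/ d)); simpl in *; nra.
Qed.

Lemma chi_decreasing d x y : 0 < d -> x <= y -> chi d y <= chi d x.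
Proof.
intros d_gt0 x_le_y; unfold chi; pose proof (exp_pos (/ d)).
pose proof (profile_le d (x * exp (/ d)) (y * exp (/ d)) ltac:(lra) ltac:(nra)); lra.
Qed.

Lemma Cn_chi n d : Cn n (chi d).
Proof.
unfold chi, profile; apply Cn_minus; [apply Cn_const|].
assert (Cs : Cn n (fun x => x * exp (/ d))) by (apply Cn_mult; [apply Cn_id | apply Cn_const]).
apply Cn_mult; [apply Cn_comp with (g := step); auto; apply Cn_step|].
apply Cn_comp with (g := step); [|apply Cn_step].
apply Cn_scal, Cn_ln; [intros; simpl; nra|].
apply Cn_ext with (fun x => (1 + x * exp (/ d) * (x * exp (/ d))) * / 2); [intros; simpl; field|].
apply Cn_mult; [apply Cn_plus; [apply Cn_const | apply Cn_mult; auto] | apply Cn_const].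
Qed.

Lemma Derive_chi_bound :
  exists M, forall d x, 0 < d -> 0 <= x -> Rabs (Derive (chi d) x) * x <= 2 * d * M.
Proof.
destruct Derive_profile_bound as [M HM]; exists M; intros d x d_gt0 x_ge0.
set (E := exp (/ d)); assert (E_gt0 : 0 < E) by apply exp_pos.
assert (Dchi : Derive (chi d) x = - (E * Derive (profile d) (x * E))).
{ apply is_derive_unique; unfold chi.
  assert (ex_derive (profile d) (x * E)) by (eexists; apply is_derive_profile).
  auto_derive; auto.
  change (fun t => profile d t) with (profile d); fold E; ring. }
rewrite Dchi, Rabs_Ropp, Rabs_mult, Rabs_pos_eq by lra.
specialize (HM d (x * E) ltac:(lra) ltac:(nra)); lra.
Qed.

Lemma continuous_comp_ex_derive {U : UniformSpace} (f : U -> R) (h : R -> R) p :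
  continuous f p -> ex_derive h (f p) -> continuous (fun q => h (f q)) p.
Proof.
intros Cf Dh; apply (continuous_comp f h p Cf).
exact (ex_derive_continuous (K := R_AbsRing) (V := R_NormedModule) h (f p) Dh).
Qed.

Lemma chi_continuous d x : 0 < d ->
  continuous (fun p : R * R => chi (fst p) (snd p)) (d, x).
Proof.
intros d_gt0; unfold chi, profile.
set (s := fun p : R * R => snd p * exp (/ fst p)).
assert (Cs : continuous s (d, x)).
{ apply (continuous_mult (K := R_AbsRing)); [apply continuous_snd|].
  apply continuous_comp_ex_derive with (h := exp) (f := fun p : R * R => / fst p);
    [|auto_derive; auto].
  apply continuous_comp_ex_derive with (h := Rinv) (f := fun p : R * R => fst p);
    [apply continuous_fst | simpl; auto_derive; lra]. }
apply (continuous_minus (V := R_NormedModule)); [apply continuous_const|].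
apply (continuous_mult (K := R_AbsRing));
  (apply continuous_comp_ex_derive with (h := step); [|apply ex_derive_step]); auto.
apply (continuous_mult (K := R_AbsRing)); [apply continuous_fst|].
apply continuous_comp_ex_derive with (h := fun z => ln ((1 + z ^ 2) / 2)) (f := s); auto.
auto_derive; simpl; nra.
Qed.

Lemma sin_ge_third x : 0 <= x <= 2 -> x / 3 <= sin x.
Proof.
intros; destruct (pre_sin_bound x 0 ltac:(lra) ltac:(lra)) as [sin_ge _].
eapply Rle_trans; [|apply sin_ge].
unfold sin_approx, sin_term; simpl; nra.
Qed.

Lemma Rabs_ratio_le f K r :
  (forall x, continuous (Derive f) x) ->
  (forall x, 0 <= x -> Rabs (Derive f x) * x <= K) ->
  0 < r < PI / 2 ->
  Rabs (RInt (fun x => - Derive f x * sin x) 0 r / sin r) <= 3 * K.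
Proof.
intros CDf HK r_range; pose proof PI_4.
assert (sin_r : r / 3 <= sin r) by (apply sin_ge_third; lra).
assert (int_le : Rabs (RInt (fun x => - Derive f x * sin x) 0 r) <= (r - 0) * K).
{ apply abs_RInt_le_const; [lra| |].
  - apply (ex_RInt_continuous (V := R_CompleteNormedModule)); intros z _.
    apply (continuous_mult (K := R_AbsRing)).
    + apply (continuous_opp (V := R_NormedModule)), CDf.
    + apply continuous_comp_ex_derive with (f := fun t => t); [apply continuous_id|].
      auto_derive; auto.
  - intros t t_range; rewrite Rabs_mult, Rabs_Ropp.
    assert (0 <= sin t <= t).
    { split; [apply sin_ge_0; lra|].
      destruct (Req_dec t 0) as [-> | t_neq0]; [rewrite sin_0; lra|].
      left; apply sin_lt_x; lra. }
    rewrite (Rabs_pos_eq (sin t)) by lra.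
    specialize (HK t ltac:(lra)); pose proof (Rabs_pos (Derive f t)); nra. }
pose proof (HK 0 (Rle_refl 0)) as K_ge0; rewrite Rmult_0_r in K_ge0.
unfold Rdiv; rewrite Rabs_mult, Rabs_inv, (Rabs_pos_eq (sin r)) by lra.
apply Rmult_le_reg_r with (sin r); [lra|].
rewrite Rmult_assoc, Rinv_l by lra; nra.
Qed.

Lemma Lub_Rbar_abs_le (E : R -> Prop) K y0 :
  E y0 -> (forall y, E y -> Rabs y <= K) ->
  exists z, Lub_Rbar E = Finite z /\ Rabs z <= K.
Proof.
intros Ey0 HK; destruct (Lub_Rbar_correct E) as [ub lub].
assert (le_K : Rbar_le (Lub_Rbar E) K).
{ apply lub; intros y Ey; specialize (HK y Ey); simpl.
  apply Rabs_le_between in HK; lra. }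
pose proof (ub y0 Ey0) as ge_y0; pose proof (HK y0 Ey0) as y0_le.
apply Rabs_le_between in y0_le.
destruct (Lub_Rbar E) as [z | |]; simpl in *; try contradiction.
exists z; split; auto; apply Rabs_le_between; lra.
Qed.

Lemma sup_ratio_abs_le f K :
  (forall x, continuous (Derive f) x) ->
  (forall x, 0 <= x -> Rabs (Derive f x) * x <= K) ->
  exists z, sup_ratio f = Finite z /\ Rabs z <= 3 * K.
Proof.
intros CDf HK; unfold sup_ratio.
apply Lub_Rbar_abs_le with (RInt (fun x => - Derive f x * sin x) 0 1 / sin 1).
- exists 1; split; auto; pose proof PI2_3_2; lra.
- intros y [r [r_range ->]]; apply Rabs_ratio_le; auto.
Qed.

Lemma filterlim_at_right_0_linear_bound (u : R -> Rbar) C :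
  (forall d, 0 < d -> exists z, u d = Finite z /\ Rabs z <= C * d) ->
  filterlim u (at_right 0) (Rbar_locally 0).
Proof.
intros Hu P [eps HP].
assert (delta_gt0 : 0 < eps / (Rabs C + 1)).
{ apply Rdiv_lt_0_compat; [apply cond_pos | pose proof (Rabs_pos C); lra]. }
exists (mkposreal _ delta_gt0); intros d d_small d_gt0; simpl in d_small.
change (Rabs (d - 0) < eps / (Rabs C + 1)) in d_small.
rewrite Rminus_0_r, Rabs_pos_eq in d_small by lra.
destruct (Hu d d_gt0) as [z [-> z_le]]; apply HP.
change (Rabs (z - 0) < eps); rewrite Rminus_0_r.
assert (d * (Rabs C + 1) < eps).
{ apply Rmult_lt_reg_r with (/ (Rabs C + 1)); [pose proof (Rabs_pos C); apply Rinv_0_lt_compat; lra|].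
  rewrite Rmult_assoc, Rinv_r by (pose proof (Rabs_pos C); lra); lra. }
pose proof (Rle_abs C); nra.
Qed.

Lemma chi_plateaus d : 0 < d <= 1 -> exists eta, 0 < eta /\
  (forall x, x < eta -> chi d x = 1) /\ (forall x, PI / 2 - eta < x -> chi d x = 0).
Proof.
intros d_range; set (E := exp (/ d)).
assert (E_ge2 : 2 <= E).
{ assert (1 <= / d) by (rewrite <- Rinv_1; apply Rinv_le_contravar; lra).
  pose proof (exp_ineq1_le (/ d)); unfold E; lra. }
assert (invE_lt : / E <= 1 / 2).
{ apply Rmult_le_reg_r with E; [lra|]; rewrite Rinv_l; lra. }
exists (/ E); split; [apply Rinv_0_lt_compat; lra|split]; intros x Hx.
- apply chi_eq1; [lra|]; fold E.
  apply Rmult_lt_compat_r with (r := E) in Hx; [|lra].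
  rewrite Rinv_l in Hx; lra.
- pose proof PI2_3_2; apply chi_eq0; fold E; simpl; nra.
Qed.

Lemma chi_eventually_ind_nonpos x : at_right 0 (fun d => chi d x = ind_nonpos x).
Proof.
unfold ind_nonpos; destruct (Rle_dec x 0) as [x_le0 | x_gt0].
{ exists (mkposreal 1 Rlt_0_1); intros d _ d_gt0.
  apply chi_eq1; pose proof (exp_pos (/ d)); nra. }
assert (delta_gt0 : 0 < Rmin x (x ^ 2 / 2)) by (apply Rmin_case; simpl; nra).
exists (mkposreal _ delta_gt0); intros d d_small d_gt0; simpl in d_small.
change (Rabs (d - 0) < Rmin x (x ^ 2 / 2)) in d_small.
rewrite Rminus_0_r, Rabs_pos_eq in d_small by lra.
pose proof (Rlt_le_trans _ _ _ d_small (Rmin_l _ _)).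
pose proof (Rlt_le_trans _ _ _ d_small (Rmin_r _ _)).
assert (inv_lt_E : / d < exp (/ d)) by (pose proof (exp_ineq1_le (/ d)); lra).
assert (d_invd : d * / d = 1) by (field; lra).
assert (0 < / d) by (apply Rinv_0_lt_compat; lra).
apply chi_eq0; simpl in *; auto; nra.
Qed.

Theorem lemma3p2 :
  exists chi : R -> R -> R,
    (* smooth, with values in [0,1] *)
    (forall d, 0 < d <= 1 -> forall (n : nat) (x : R), ex_derive_n (chi d) n x) /\
    (forall d, 0 < d <= 1 -> forall x, 0 <= chi d x <= 1) /\
    (* depends continuously on d: (d,x) |-> chi d x is continuous on (0,1] x R *)
    (forall d x, 0 < d <= 1 ->
       filterlim (fun p : R * R => chi (fst p) (snd p))
         (within (fun p : R * R => 0 < fst p <= 1) (locally (d, x)))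
         (locally (chi d x))) /\
    (* (i) decreasing *)
    (forall d, 0 < d <= 1 -> forall x y, x <= y -> chi d y <= chi d x) /\
    (* (ii) *)
    (forall d, 0 < d <= 1 -> exists eta, 0 < eta /\
       (forall x, x < eta -> chi d x = 1) /\
       (forall x, PI / 2 - eta < x -> chi d x = 0)) /\
    (* (iii) pointwise convergence to 1_{x <= 0} as d -> 0+ *)
    (forall x, filterlim (fun d => chi d x) (at_right 0) (locally (ind_nonpos x))) /\
    (* (iv) *)
    filterlim (fun d => sup_ratio (chi d)) (at_right 0) (Rbar_locally (Finite 0)).
Proof.
exists chi; split; [|split; [|split; [|split; [|split; [|split]]]]].
- intros d _ n; apply Cn_ex_derive_n, Cn_chi.
- intros d _; apply chi_range.
- intros d x [d_gt0 _].
  apply (filterlim_filter_le_1 (F := locally (d, x))); [apply filter_le_within|].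
  apply chi_continuous; auto.
- intros d [d_gt0 _] x y; apply chi_decreasing; auto.
- apply chi_plateaus.
- intros x; apply (filterlim_ext_loc (fun _ => ind_nonpos x)); [|apply filterlim_const].
  apply (filter_imp _ _ (fun d E => eq_sym E)), chi_eventually_ind_nonpos.
- destruct Derive_chi_bound as [M HM].
  apply filterlim_at_right_0_linear_bound with (C := 6 * M); intros d d_gt0.
  replace (6 * M * d) with (3 * (2 * d * M)) by ring.
  apply sup_ratio_abs_le; [apply Cn_continuous_Derive, Cn_chi | intros; apply HM; auto].
Qed.
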